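(* Let $m\le k\le n$ be positive integers, $\epsilon\in(0,1)$ with $k\ge\frac{4m}{\epsilon}+\frac{12}{\epsilon^2}\log(\frac1\epsilon)$, $\mathbf a_1,\dots,\mathbf a_n\in\mathbb R^m$, and $w^*=\max\{[\det(\sum_{i\in S}\mathbf a_i\mathbf a_i^\top)]^{1/m}: S\subseteq[n],|S|=k\}$. Let $(\hat{\mathbf x},\hat w)$ be an optimal solution of the convex relaxation $\max\{w: w\le[\det(\sum_{i\in[n]}x_i\mathbf a_i\mathbf a_i^\top)]^{1/m},\ \sum_ix_i=k,\ \mathbf x\in[0,1]^n\}$. Consider the randomized algorithm: repeatedly sample a set $\mathcal S\subseteq[n]$ by including each $i\in[n]$ independently with probability $\frac{\hat x_i}{1+\epsilon}$, until $|\mathcal S|\le k$; then, while $|\mathcal S|<k$, add to $\mathcal S$ an element $j^*\in\arg\max_{j\in[n]\setminus\mathcal S}[\det(\sum_{i\in\mathcal S}\mathbf a_i\mathbf a_i^\top+\mathbf a_j\mathbf a_j^\top)]^{1/m}$; output $\mathcal S$. Then the output (a set of size $k$) satisfies $$\Big\{\mathbb E\Big[\det\Big(\sum_{i\in\mathcal S}\mathbf a_i\mathbf a_i^\top\Big)\Big]\Big\}^{1/m}\ge(1-\epsilon)\,w^*,$$ i.e. the algorithm is a $(1-\epsilon)$-approximation for the $D$-optimal design problem.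
   Context: $[n]=\{1,\dots,n\}$; $\log$ is the natural logarithm. This is the $D$-optimal design problem without repetitions. *)

From HB Require Import structures.
From mathcomp Require Import all_boot all_order all_algebra.
From mathcomp Require Import reals exp.
Set Implicit Arguments. Unset Strict Implicit. Unset Printing Implicit Defensive.
Import Order.TTheory GRing.Theory Num.Theory.
Local Open Scope ring_scope.

Section DOpt.
Variables (R : realType) (m n : nat) (a : 'I_n -> 'cV[R]_m).

Definition infoS (S : {set 'I_n}) : 'M[R]_m :=
  \sum_(i in S) (a i *m (a i)^T).

Definition infoX (x : 'I_n -> R) : 'M[R]_m :=
  \sum_(i < n) (x i *: (a i *m (a i)^T)).

Definition detroot (M : 'M[R]_m) : R := powR (\det M) (m%:R^-1).

(* w^* = max over |S| = k of [det(sum_{i in S} a_i a_i^T)]^{1/m}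
   (values are >= 0, so 0 is a harmless neutral element; the set of S is
   nonempty whenever k <= n). *)
Definition wstar (k : nat) : R :=
  \big[Order.max/0]_(S : {set 'I_n} | #|S| == k) detroot (infoS S).

Definition relax_feasible (k : nat) (x : 'I_n -> R) : Prop :=
  (\sum_(i < n) x i = k%:R) /\ (forall i, 0 <= x i <= 1).

Definition relax_optimal (k : nat) (xh : 'I_n -> R) (wh : R) : Prop :=
  [/\ relax_feasible k xh, wh <= detroot (infoX xh) &
      forall x w, relax_feasible k x -> w <= detroot (infoX x) -> w <= wh].

(* greedy_path k T U : starting from the current set T, the greedy loop
   "while |S| < k add j* in argmax_{j notin S} detroot(infoS (S + j))"
   can terminate with output U (for some resolution of ties). *)
Inductive greedy_path (k : nat) : {set 'I_n} -> {set 'I_n} -> Prop :=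
| gp_done (S : {set 'I_n}) : ~~ (#|S| < k)%N -> greedy_path k S S
| gp_step (S : {set 'I_n}) (j : 'I_n) (U : {set 'I_n}) : (#|S| < k)%N -> j \notin S ->
    (forall j', j' \notin S ->
        detroot (infoS (j' |: S)) <= detroot (infoS (j |: S))) ->
    greedy_path k (j |: S) U -> greedy_path k S U.

Definition prod_prob (p : 'I_n -> R) (T : {set 'I_n}) : R :=
  \prod_(i in T) p i * \prod_(i in ~: T) (1 - p i).

(* Expected value of det(sum_{i in output} a_i a_i^T) for the algorithm:
   rejection sampling until |S| <= k yields the product distribution
   conditioned on |S| <= k; then the greedy completion g is applied. *)
Definition expected_det (k : nat) (p : 'I_n -> R)
    (g : {set 'I_n} -> {set 'I_n}) : R :=
  (\sum_(T : {set 'I_n} | (#|T| <= k)%N) prod_prob p T * \det (infoS (g T)))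
  / (\sum_(T : {set 'I_n} | (#|T| <= k)%N) prod_prob p T).

End DOpt.

From HB Require Import structures.
From mathcomp Require Import all_boot all_order all_algebra.
From mathcomp Require Import reals exp.
From mathcomp Require Import perm sequences ring lra.
Import Order.TTheory GRing.Theory Num.Theory.
Local Open Scope ring_scope.

Set Implicit Arguments. Unset Strict Implicit. Unset Printing Implicit Defensive.

(* By Cauchy-Binet, [det (sum_i x_i a_i a_i^T)] is the polynomial
   [sum_(|U| = m) (prod_(i in U) x_i) det(A_U)^2], with nonnegative
   coefficients.  For a 0/1 vector it sums the coefficients of the m-subsets
   of the support, so it grows with the set and the greedy completion cannot
   decrease it.  Averaging over the independent sample [T] restricted to
   [|T| <= k], the coefficient of [U] is weighted by
   [P(U \subset T, |T| <= k) >= (1 - eps^2) prod_(i in U) p_i]: a Chernoff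
   bound with base [1 + eps/2] on [|T|], whose tail the hypothesis on [k]
   makes at most [eps^2].  Dividing by [P(|T| <= k) <= 1] only helps, so the
   expectation is at least [(1 - eps^2) (1 + eps)^-m det(sum xh_i a_i a_i^T)
   >= (1 - eps)^m det(sum xh_i a_i a_i^T)], whose m-th root is at least [w*]
   because indicator vectors of k-subsets are feasible for the relaxation. *)

Section ChernoffArithmetic.
Variable R : realType.

Lemma onesubV_le_ln (y : R) : 0 < y -> 1 - y^-1 <= ln y.
Proof.
move=> y0; have yV0 : 0 < y^-1 by rewrite invr_gt0.
have := @le_ln1Dx R (y^-1 - 1) ltac:(lra).
by rewrite addrC subrK lnV ?posrE //; lra.
Qed.

Variable e : R.

Let psi := e / (4 + e) + e / (4 + 2 * e).
Let gap := psi - e / 2 / (1 + e).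

(* Split [1 + e/2] as [(1 + e/4) * ((1 + e/2) / (1 + e/4))] and bound the
   logarithm of each factor by [onesubV_le_ln]. *)
Lemma ln1Dhalf_ge : 0 < e -> psi <= ln (1 + e / 2).
Proof.
move=> e_gt0.
have q4 : 0 < 1 + e / 4 by lra.
have q2 : 0 < (1 + e / 2) / (1 + e / 4) by apply: divr_gt0; lra.
have -> : 1 + e / 2 = (1 + e / 4) * ((1 + e / 2) / (1 + e / 4)).
  by field; lra.
rewrite lnM ?posrE // /psi.
have -> : e / (4 + e) = 1 - (1 + e / 4)^-1 by field; lra.
have -> : e / (4 + 2 * e) = 1 - ((1 + e / 2) / (1 + e / 4))^-1 by field; lra.
by apply: lerD; apply: onesubV_le_ln.
Qed.

Let D := (4 + e) * (4 + 2 * e) * (2 + 2 * e).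

Let D_gt0 : 0 < e -> 0 < D.
Proof. by move=> ?; rewrite /D !pmulr_rgt0; lra. Qed.

Let gapE : 0 < e -> gap = e ^+ 2 * (10 + 4 * e) / D.
Proof. by move=> ?; rewrite /gap /psi /D; field; lra. Qed.

Lemma gap_ge0 : 0 < e -> 0 <= gap.
Proof. by move=> ?; rewrite gapE ?divr_ge0 ?mulr_ge0 ?sqr_ge0 ?ltW //; lra. Qed.

Lemma psi_le_gap : 0 < e -> e < 1 -> e * psi <= 4 * gap.
Proof.
move=> e_gt0 e_lt1.
have -> : e * psi = e ^+ 2 * ((8 + 3 * e) * (2 + 2 * e)) / D.
  by rewrite /psi /D; field; lra.
rewrite gapE // !mulrA ler_pM2r ?invr_gt0 ?D_gt0 //.
have : (8 + 3 * e) * (2 + 2 * e) <= 4 * (10 + 4 * e) by nra.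
have : 0 <= e ^+ 2 by exact: sqr_ge0.
nra.
Qed.

Lemma gap_at_endpoint : 0 < e -> e < 1 ->
  0 <= 4 * gap / e + (12 * gap / e ^+ 2 - 2) * (e^-1 - 1).
Proof.
move=> e_gt0 e_lt1.
have -> : 4 * gap / e + (12 * gap / e ^+ 2 - 2) * (e^-1 - 1) =
    (56 - 120 * e + 48 * e ^+ 2 + 64 * e ^+ 3 + 8 * e ^+ 4) / (e * D).
  by rewrite gapE // /D; field; lra.
apply: divr_ge0; last by rewrite mulr_ge0 ?ltW ?D_gt0.
have q1 : 0 <= e * (e - 1/2) ^+ 2 by apply: mulr_ge0; [lra|exact: sqr_ge0].
have q2 : 0 <= (e - 17/28) ^+ 2 by exact: sqr_ge0.
have q3 : 0 <= e ^+ 4 by rewrite exprn_ge0 //; lra.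
nra.
Qed.

(* [gap * K] absorbs [(M - 1) * psi] by [psi_le_gap]; what remains is affine
   in [L], hence nonnegative on [[0, 1/e - 1]] by its values at the ends. *)
Lemma chernoff_exponent_le (l L M K : R) : 0 < e -> e < 1 ->
  1 <= M -> M <= K -> 0 <= L -> L <= e^-1 - 1 -> psi <= l ->
  4 * M / e + 12 / e ^+ 2 * L <= K ->
  e / 2 * K / (1 + e) + 2 * L <= (K - M + 1) * l.
Proof.
move=> e_gt0 e_lt1 M1 MK L0 Le hl hK.
have gap0 := gap_ge0 e_gt0.
have affine_ge0 : 0 <= 4 * gap / e + (12 * gap / e ^+ 2 - 2) * L.
  case: (lerP 2 (12 * gap / e ^+ 2)) => h.
    by rewrite addr_ge0 ?mulr_ge0 ?divr_ge0 //; lra.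
  apply: le_trans (gap_at_endpoint e_gt0 e_lt1) _; rewrite lerD2l; apply: ler_wnM2l; lra.
have psi_gap : (M - 1) * psi <= (M - 1) * (4 * gap / e).
  by rewrite ler_wpM2l ?ler_pdivlMr ?[psi * e]mulrC ?psi_le_gap //; lra.
have gapK : (4 * M / e + 12 / e ^+ 2 * L) * gap <= K * gap by rewrite ler_wpM2r.
have split_gap : (4 * M / e + 12 / e ^+ 2 * L) * gap =
    (M - 1) * (4 * gap / e) + (4 * gap / e + (12 * gap / e ^+ 2 - 2) * L) + 2 * L.
  by field; lra.
have split_lhs : e / 2 * K / (1 + e) = K * psi - K * gap by rewrite /gap; field; lra.
have : (K - M + 1) * psi <= (K - M + 1) * l by rewrite ler_wpM2l //; lra.
lra.
Qed.
End ChernoffArithmetic.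

(* With [z = 1 + e/2], the left-hand side is [exp] of
   [(m - k - 1) ln z + (e/2) S], and [chernoff_exponent_le] bounds this
   exponent by [2 ln e]. *)
Lemma chernoff_factor_le_sqr (R : realType) (e S : R) (m k : nat) :
  0 < e -> e < 1 -> (0 < m)%N -> (m <= k)%N ->
  4 * m%:R / e + 12 / e ^+ 2 * ln (e^-1) <= k%:R -> S <= k%:R / (1 + e) ->
  (1 + e / 2) ^+ m / (1 + e / 2) ^+ k.+1 * expR (e / 2 * S) <= e ^+ 2.
Proof.
move=> e_gt0 e_lt1 m_gt0 mk hk hS.
have eV_gt0 : 0 < e^-1 by rewrite invr_gt0.
set l := ln (1 + e / 2); set L := ln (e^-1).
have powE (j : nat) : (1 + e / 2) ^+ j = expR (j%:R * l).
  by rewrite expRM_natl lnK // posrE; lra.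
have sqrE : e ^+ 2 = expR (2%:R * - L).
  by rewrite expRM_natl /L lnV ?posrE // opprK lnK // posrE.
rewrite !powE sqrE -expRN -!expRD ler_expR -natr1.
have L_ge0 : 0 <= L.
  by rewrite ln_ge0 // -[1]invr1 lef_pV2 ?posrE //; lra.
have L_le : L <= e^-1 - 1.
  by have := @le_ln1Dx R (e^-1 - 1) ltac:(lra); rewrite addrC subrK.
have m_ge1 : 1 <= m%:R :> R by rewrite ler1n.
have mk_R : m%:R <= k%:R :> R by rewrite ler_nat.
have := chernoff_exponent_le e_gt0 e_lt1 m_ge1 mk_R L_ge0 L_le (ln1Dhalf_ge e_gt0) hk.
have : e / 2 * S <= e / 2 * (k%:R / (1 + e)) by rewrite ler_wpM2l //; lra.
rewrite -/l mulrA; lra.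
Qed.

Lemma sum_prod_setC (R : comNzRingType) (I : finType) (x y : I -> R) :
  \sum_(T : {set I}) (\prod_(i in T) x i * \prod_(i in ~: T) y i) =
  \prod_i (x i + y i).
Proof.
transitivity (\prod_i \sum_(b : bool) (if b then x i else y i)); last first.
  by apply: eq_bigr => i _; rewrite big_bool.
rewrite bigA_distr_bigA /= (reindex (fun f : {ffun I -> bool} => [set i | f i])) /=.
  apply: eq_bigr => f _; rewrite [RHS](bigID f) /=; congr (_ * _).
    by apply: eq_big => [i|i]; rewrite inE // => ->.
  by apply: eq_big => [i|i]; rewrite !inE // => /negbTE ->.
exists (fun T : {set I} => [ffun i => i \in T]) => [f _|T _].
  by apply/ffunP => i; rewrite ffunE inE.
by apply/setP => i; rewrite inE ffunE.
Qed.

Section CauchyBinet.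
Variables (R : realType) (m n : nat) (a : 'I_n -> 'cV[R]_m).

Definition rows_of (f : {ffun 'I_m -> 'I_n}) : 'M[R]_m :=
  \matrix_(r, j) a (f r) j 0.

Definition binet_term (f : {ffun 'I_m -> 'I_n}) : R :=
  \prod_r a (f r) r 0 * \det (rows_of f).

(* Grouping the Leibniz expansion of [\det (infoX a x)] by the image of the
   row-index map [f] yields the Cauchy-Binet coefficients. *)
Definition binet_coef (U : {set 'I_n}) : R :=
  \sum_(f : {ffun 'I_m -> 'I_n} | f @: setT == U) binet_term f.

Lemma det_infoX_expand (x : 'I_n -> R) :
  \det (infoX a x) = \sum_(f : {ffun 'I_m -> 'I_n}) \prod_r x (f r) * binet_term f.
Proof.
rewrite /determinant; transitivity (\sum_(s : 'S_m) (-1) ^+ s * \sum_(f : {ffun 'I_m -> 'I_n})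
    \prod_r (x (f r) * a (f r) r 0 * a (f r) (s r) 0)).
  apply: eq_bigr => s _; congr (_ * _).
  rewrite (eq_bigr (fun r => \sum_i (x i * a i r 0 * a i (s r) 0))).
    by rewrite bigA_distr_bigA.
  move=> r _; rewrite /infoX summxE; apply: eq_bigr => i _.
  by rewrite !mxE big_ord1 mxE mulrA.
under eq_bigr do rewrite big_distrr.
rewrite exchange_big /=; apply: eq_bigr => f _.
rewrite /binet_term /determinant mulrA big_distrr /=; apply: eq_bigr => s _.
have -> : \prod_r rows_of f r (s r) = \prod_r a (f r) (s r) 0.
  by apply: eq_bigr => r _; rewrite mxE.
by rewrite !big_split /= mulrCA mulrA.
Qed.

Lemma binet_term_eq0 (f : {ffun 'I_m -> 'I_n}) : ~~ injectiveb f -> binet_term f = 0.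
Proof.
move=> /injectivePn [r1 [r2 r12 fr12]].
by rewrite /binet_term (determinant_alternate r12) ?mulr0 // => j; rewrite !mxE fr12.
Qed.

Lemma det_infoX_binet (x : 'I_n -> R) :
  \det (infoX a x) = \sum_(U : {set 'I_n}) \prod_(i in U) x i * binet_coef U.
Proof.
rewrite det_infoX_expand.
transitivity (\sum_(f : {ffun 'I_m -> 'I_n}) \prod_(i in f @: setT) x i * binet_term f).
  apply: eq_bigr => f _; have [/injectiveP f_inj|f_ninj] := boolP (injectiveb f).
    rewrite big_imset /=; last by move=> r r' _ _ /f_inj.
    by congr (_ * _); apply: eq_bigl => r; rewrite in_setT.
  by rewrite binet_term_eq0 ?mulr0.
rewrite (partition_big (fun f : {ffun 'I_m -> 'I_n} => f @: setT) predT) //=.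
by apply: eq_bigr => U _; rewrite big_distrr; apply: eq_bigr => f /eqP <-.
Qed.

Lemma binet_coef_eq0 (U : {set 'I_n}) : #|U| != m -> binet_coef U = 0.
Proof.
move=> cardU; rewrite /binet_coef big1 // => f /eqP fU; apply: binet_term_eq0.
apply: contra cardU => /injectiveP f_inj.
by rewrite -fU card_imset // cardsT card_ord.
Qed.

Lemma infoS_infoX (T : {set 'I_n}) : infoS a T = infoX a (fun i => (i \in T)%:R).
Proof.
rewrite /infoS /infoX big_mkcond; apply: eq_bigr => i _.
by case: (i \in T); rewrite ?scale1r ?scale0r.
Qed.

Lemma det_infoS_binet (T : {set 'I_n}) :
  \det (infoS a T) = \sum_(U : {set 'I_n}) (U \subset T)%:R * binet_coef U.
Proof.
rewrite infoS_infoX det_infoX_binet; apply: eq_bigr => U _; congr (_ * _).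
have [UT | /subsetPn [i iU iT]] := boolP (U \subset T).
  by rewrite big1 // => i /(subsetP UT) ->.
by rewrite (bigD1 i) //= (negbTE iT) mul0r.
Qed.

Lemma det_gram_ge0 (h : 'I_m -> 'I_n) :
  0 <= \det (\sum_(j < m) a (h j) *m (a (h j))^T).
Proof.
set B : 'M[R]_m := \matrix_(r, j) a (h j) r 0.
have -> : \sum_(j < m) a (h j) *m (a (h j))^T = B *m B^T.
  apply/matrixP => r s; rewrite summxE !mxE; apply: eq_bigr => j _.
  by rewrite !mxE big_ord1 !mxE.
by rewrite det_mulmx det_tr -expr2 sqr_ge0.
Qed.

Lemma det_infoS_ge0 (U : {set 'I_n}) : #|U| = m -> 0 <= \det (infoS a U).
Proof.
move=> cardU; rewrite /infoS big_enum_val /=.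
move: (@enum_val _ (mem U)); rewrite cardU; exact: det_gram_ge0.
Qed.

Lemma binet_coef_ge0 (U : {set 'I_n}) : 0 <= binet_coef U.
Proof.
have [/eqP cardU|/binet_coef_eq0 -> //] := boolP (#|U| == m).
suff -> : binet_coef U = \det (infoS a U) by exact: det_infoS_ge0.
rewrite det_infoS_binet (bigD1 U) //= subxx mul1r big1 ?addr0 // => V VU.
have [VsubU|] := boolP (V \subset U); last by rewrite mul0r.
rewrite binet_coef_eq0 ?mulr0 // -cardU neq_ltn proper_card //.
by rewrite properEneq VU.
Qed.

Lemma ler_det_infoS (S T : {set 'I_n}) :
  S \subset T -> \det (infoS a S) <= \det (infoS a T).
Proof.
move=> ST; rewrite !det_infoS_binet; apply: ler_sum => U _.
rewrite ler_wpM2r ?binet_coef_ge0 //.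
by have [US|] := boolP (U \subset S); rewrite ?ler0n // (subset_trans US ST).
Qed.

Lemma det_infoX_ge0 (x : 'I_n -> R) : (forall i, 0 <= x i) -> 0 <= \det (infoX a x).
Proof.
move=> x_ge0; rewrite det_infoX_binet; apply: sumr_ge0 => U _.
by rewrite mulr_ge0 ?binet_coef_ge0 // prodr_ge0.
Qed.

End CauchyBinet.

Section ProductMeasure.
Variables (R : realType) (n : nat) (p : 'I_n -> R).
Hypothesis p01 : forall i, 0 <= p i <= 1.

Lemma prod_prob_ge0 (T : {set 'I_n}) : 0 <= prod_prob p T.
Proof.
by rewrite mulr_ge0 // prodr_ge0 // => i _; have /andP[] := p01 i; lra.
Qed.

Lemma sum_prod_prob : \sum_(T : {set 'I_n}) prod_prob p T = 1.
Proof. by rewrite sum_prod_setC big1 // => i _; rewrite subrKC. Qed.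

Lemma prod_prob_supset (U T : {set 'I_n}) :
  prod_prob p T * (U \subset T)%:R =
  \prod_(i in T) p i * \prod_(i in ~: T) (if i \in U then 0 else 1 - p i).
Proof.
have [UT | /subsetPn [i iU iT]] := boolP (U \subset T).
  rewrite mulr1; congr (_ * _); apply: eq_bigr => i; rewrite inE => iT.
  by rewrite ifN //; apply: contra iT => /(subsetP UT).
by rewrite mulr0 [X in _ * X](bigD1 i) ?inE //= iU mul0r mulr0.
Qed.

Lemma prob_supset (U : {set 'I_n}) :
  \sum_(T : {set 'I_n}) prod_prob p T * (U \subset T)%:R = \prod_(i in U) p i.
Proof.
rewrite (eq_bigr _ (fun T _ => prod_prob_supset U T)).
rewrite sum_prod_setC (bigID (mem U)) /= [X in _ * X]big1 ?mulr1.
  by apply: eq_bigr => i ->; rewrite addr0.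
by move=> i /negbTE ->; rewrite subrKC.
Qed.

Lemma mgf_supset (U : {set 'I_n}) (z : R) :
  \sum_(T : {set 'I_n}) prod_prob p T * (U \subset T)%:R * z ^+ #|T| =
  z ^+ #|U| * \prod_(i in U) p i * \prod_(i in ~: U) (1 - p i + p i * z).
Proof.
transitivity (\sum_(T : {set 'I_n}) (\prod_(i in T) (p i * z) *
    \prod_(i in ~: T) (if i \in U then 0 else 1 - p i))).
  by apply: eq_bigr => T _; rewrite prod_prob_supset big_split /= prodr_const; ring.
rewrite sum_prod_setC (bigID (mem U)) /=; congr (_ * _).
  rewrite -prodr_const -big_split /=.
  by apply: eq_bigr => i ->; rewrite addr0 mulrC.
by apply: eq_big => [i|i]; rewrite ?inE // => /negbTE ->; ring.
Qed.

(* Markov's inequality for [z ^+ #|T|] on the event [U \subset T]: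
   the mass of [U \subset T, K < #|T|] is at most the moment of
   [mgf_supset] divided by [z ^+ K.+1]. *)
Lemma prob_supset_card_le_markov (U : {set 'I_n}) (K : nat) (z : R) : 1 <= z ->
  \prod_(i in U) p i *
    (1 - z ^+ #|U| / z ^+ K.+1 * \prod_(i in ~: U) (1 - p i + p i * z))
  <= \sum_(T : {set 'I_n} | (#|T| <= K)%N) prod_prob p T * (U \subset T)%:R.
Proof.
move=> z_ge1; have zK_gt0 : 0 < z ^+ K.+1 by rewrite exprn_gt0 //; lra.
have q_ge0 (T : {set 'I_n}) : 0 <= prod_prob p T * (U \subset T)%:R.
  by rewrite mulr_ge0 ?prod_prob_ge0.
have markov : \sum_(T : {set 'I_n} | ~~ (#|T| <= K)%N) prod_prob p T * (U \subset T)%:R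
    <= z ^+ #|U| * \prod_(i in U) p i * \prod_(i in ~: U) (1 - p i + p i * z) / z ^+ K.+1.
  rewrite -mgf_supset mulr_suml [X in _ <= X](bigID (fun T : {set 'I_n} => (#|T| <= K)%N)) /=.
  apply: ler_wpDl.
    apply: sumr_ge0 => T _.
    by rewrite mulr_ge0 ?invr_ge0 ?(ltW zK_gt0) // mulr_ge0 // exprn_ge0 //; lra.
  apply: ler_sum => T; rewrite -ltnNge => KT.
  rewrite -mulrA ler_peMr // ler_pdivlMr // mul1r ler_weXn2l //; lra.
have := prob_supset U.
rewrite (bigID (fun T : {set 'I_n} => (#|T| <= K)%N)) /= => /(canRL (addrK _)) ->.
rewrite mulrBr mulr1 lerD2l lerN2; apply: le_trans markov _.
by rewrite le_eqVlt; apply/orP; left; apply/eqP; ring.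
Qed.

(* [1 - p i + p i * z <= expR ((z - 1) * p i)] with [z = 1 + e/2] turns the
   Markov bound into the quantity estimated by [chernoff_factor_le_sqr]. *)
Lemma prob_supset_card_le_ge (e : R) (m k : nat) (U : {set 'I_n}) :
  0 < e -> e < 1 -> (0 < m)%N -> (m <= k)%N ->
  4 * m%:R / e + 12 / e ^+ 2 * ln (e^-1) <= k%:R ->
  \sum_i p i <= k%:R / (1 + e) -> #|U| = m ->
  (1 - e ^+ 2) * \prod_(i in U) p i
  <= \sum_(T : {set 'I_n} | (#|T| <= k)%N) prod_prob p T * (U \subset T)%:R.
Proof.
move=> e_gt0 e_lt1 m_gt0 mk hk sum_p cardU.
have z_ge1 : 1 <= 1 + e / 2 by lra.
apply: le_trans (prob_supset_card_le_markov U k z_ge1).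
rewrite mulrC; apply: ler_wpM2l.
  by rewrite prodr_ge0 // => i _; case/andP: (p01 i).
rewrite lerD2l lerN2 cardU.
have sum_pC : \sum_(i in ~: U) p i <= k%:R / (1 + e).
  apply: le_trans sum_p; rewrite [X in _ <= X](bigID (mem (~: U))) /= lerDl.
  by rewrite sumr_ge0 // => i _; case/andP: (p01 i).
apply: le_trans (chernoff_factor_le_sqr e_gt0 e_lt1 m_gt0 mk hk sum_pC).
apply: ler_wpM2l; first by rewrite divr_ge0 ?exprn_ge0 //; lra.
rewrite mulr_sumr expR_sum; apply: ler_prod => i _; have /andP[p_ge0 p_le1] := p01 i.
have -> : 1 - p i + p i * (1 + e / 2) = 1 + e / 2 * p i by ring.
by rewrite expR_ge1Dx andbT addr_ge0 ?mulr_ge0 //; lra.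
Qed.

End ProductMeasure.

Lemma greedy_path_subset (R : realType) (m n k : nat) (a : 'I_n -> 'cV[R]_m)
    (S U : {set 'I_n}) :
  greedy_path a k S U -> S \subset U.
Proof. by elim=> // {}S j {}U _ _ _ _; apply: subset_trans; exact: subsetUr. Qed.

Section Rounding.
Variables (R : realType) (m n : nat) (a : 'I_n -> 'cV[R]_m).

Lemma sum_prod_prob_det_ge (p : 'I_n -> R) (e : R) (k : nat)
    (g : {set 'I_n} -> {set 'I_n}) :
  (forall i, 0 <= p i <= 1) -> 0 < e -> e < 1 -> (0 < m)%N -> (m <= k)%N ->
  4 * m%:R / e + 12 / e ^+ 2 * ln (e^-1) <= k%:R ->
  \sum_i p i <= k%:R / (1 + e) ->
  (forall T : {set 'I_n}, (#|T| <= k)%N -> T \subset g T) ->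
  (1 - e ^+ 2) * \det (infoX a p)
  <= \sum_(T : {set 'I_n} | (#|T| <= k)%N) prod_prob p T * \det (infoS a (g T)).
Proof.
move=> p01 e_gt0 e_lt1 m_gt0 mk hk sum_p g_ext.
apply: (@le_trans _ _ (\sum_(T : {set 'I_n} | (#|T| <= k)%N)
    prod_prob p T * \det (infoS a T))); last first.
  apply: ler_sum => T cardT; apply: ler_wpM2l; first exact: prod_prob_ge0.
  exact/ler_det_infoS/g_ext.
rewrite (eq_bigr _ (fun T _ => congr1 (GRing.mul _) (det_infoS_binet a T))).
under eq_bigr do rewrite mulr_sumr.
rewrite exchange_big det_infoX_binet mulr_sumr /=; apply: ler_sum => U _.
have [/eqP cardU|/binet_coef_eq0 ->] := boolP (#|U| == m); last first.
  by rewrite !mulr0 big1 // => T _; rewrite !mulr0.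
rewrite (eq_bigr (fun T => prod_prob p T * (U \subset T)%:R * binet_coef a U));
  last by move=> T _; rewrite mulrA.
have prob_ge := prob_supset_card_le_ge p01 e_gt0 e_lt1 m_gt0 mk hk sum_p cardU.
by rewrite -mulr_suml mulrA; apply: ler_wpM2r; first exact: binet_coef_ge0.
Qed.

Lemma expected_det_ge (x : 'I_n -> R) (e : R) (k : nat)
    (g : {set 'I_n} -> {set 'I_n}) :
  relax_feasible k x -> 0 < e -> e < 1 -> (0 < m)%N -> (m <= k)%N ->
  4 * m%:R / e + 12 / e ^+ 2 * ln (e^-1) <= k%:R ->
  (forall T : {set 'I_n}, (#|T| <= k)%N -> greedy_path a k T (g T)) ->
  (1 - e) ^+ m * \det (infoX a x) <= expected_det a k (fun i => x i / (1 + e)) g.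
Proof.
move=> [sum_x x01] e_gt0 e_lt1 m_gt0 mk hk greedy.
set p := fun i => x i / (1 + e).
have p01 i : 0 <= p i <= 1.
  by have /andP[? ?] := x01 i; rewrite divr_ge0 ?ler_pdivrMr ?mul1r //=; lra.
have p_lt1 i : p i < 1.
  by have /andP[? ?] := x01 i; rewrite ltr_pdivrMr ?mul1r //; lra.
have sum_p : \sum_i p i <= k%:R / (1 + e) by rewrite -mulr_suml sum_x.
have g_ext (T : {set 'I_n}) : (#|T| <= k)%N -> T \subset g T.
  by move/greedy/greedy_path_subset.
have numer := sum_prod_prob_det_ge p01 e_gt0 e_lt1 m_gt0 mk hk sum_p g_ext.
have det_p : \det (infoX a p) = (1 + e)^-1 ^+ m * \det (infoX a x).
  rewrite -detZ /infoX scaler_sumr; congr (\det _); apply: eq_bigr => i _.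
  by rewrite scalerA mulrC.
have coef : (1 - e) ^+ m <= (1 - e ^+ 2) * (1 + e)^-1 ^+ m.
  have -> : 1 - e = (1 - e ^+ 2) * (1 + e)^-1 by field; lra.
  rewrite exprMn; apply: ler_wpM2r; first by rewrite exprn_ge0 // invr_ge0; lra.
  have e2_ge0 : 0 <= 1 - e ^+ 2 by nra.
  have e2_le1 : 1 - e ^+ 2 <= 1 by nra.
  by rewrite -[leRHS]expr1 (ler_wiXn2l e2_ge0 e2_le1).
have det_x_ge0 : 0 <= \det (infoX a x).
  by apply: det_infoX_ge0 => i; case/andP: (x01 i).
have denom_gt0 : 0 < \sum_(T : {set 'I_n} | (#|T| <= k)%N) prod_prob p T.
  rewrite (bigD1 set0) ?cards0 //= ltr_wpDr ?sumr_ge0 // => [T _|].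
    exact: prod_prob_ge0.
  by rewrite /prod_prob big_set0 mul1r prodr_gt0 // => i _; rewrite subr_gt0.
have denom_le1 : \sum_(T : {set 'I_n} | (#|T| <= k)%N) prod_prob p T <= 1.
  rewrite -(sum_prod_prob p) [leRHS](bigID (fun T : {set 'I_n} => (#|T| <= k)%N)).
  by rewrite lerDl sumr_ge0 // => T _; exact: prod_prob_ge0.
rewrite /expected_det ler_pdivlMr //.
apply: le_trans (ler_piMr _ denom_le1) _; first by rewrite mulr_ge0 ?exprn_ge0 //; lra.
by apply: le_trans numer; rewrite det_p mulrA ler_wpM2r.
Qed.

Lemma wstar_le_relax (k : nat) (xh : 'I_n -> R) (wh : R) :
  relax_optimal a k xh wh -> wstar a k <= detroot (infoX a xh).
Proof.
move=> [_ wh_le wh_max]; apply: bigmax_le; first exact: powR_ge0.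
move=> S /eqP cardS; apply: le_trans wh_le.
apply: (wh_max (fun i => (i \in S)%:R)); last by rewrite infoS_infoX.
split=> [|i]; last by case: (i \in S); rewrite ?ler01 ?lexx.
rewrite (eq_bigr (fun i => if i \in S then 1 else 0)) => [|i _]; last by case: (i \in S).
by rewrite -big_mkcond /= sumr_const cardS.
Qed.

End Rounding.

Lemma powR_exprV (R : realType) (c : R) (m : nat) :
  (0 < m)%N -> 0 <= c -> powR (c ^+ m) (m%:R^-1) = c.
Proof.
move=> m_gt0 c_ge0.
by rewrite -powR_mulrn // -powRrM divff ?powRr1 // pnatr_eq0 -lt0n.
Qed.

Theorem theorem3 (R : realType) (m k n : nat) (eps : R)
  (a : 'I_n -> 'cV[R]_m) (xh : 'I_n -> R) (wh : R)
  (g : {set 'I_n} -> {set 'I_n}) :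
  (0 < m)%N -> (m <= k)%N -> (k <= n)%N ->
  0 < eps < 1 ->
  4 * m%:R / eps + 12 / eps ^+ 2 * ln (eps^-1) <= k%:R ->
  relax_optimal a k xh wh ->
  (forall T : {set 'I_n}, (#|T| <= k)%N -> greedy_path a k T (g T)) ->
  powR (expected_det a k (fun i => xh i / (1 + eps)) g) (m%:R^-1)
    >= (1 - eps) * wstar a k.
Proof.
move=> m_gt0 mk _ /andP[e_gt0 e_lt1] hk opt greedy.
have [feasible _ _] := opt.
have xh_ge0 i : 0 <= xh i by case: feasible => _ /(_ i) /andP[].
have det_ge0 := det_infoX_ge0 a xh_ge0.
have c_ge0 : 0 <= 1 - eps by lra.
have expect := expected_det_ge feasible e_gt0 e_lt1 m_gt0 mk hk greedy.
apply: le_trans (ler_wpM2l c_ge0 (wstar_le_relax opt)) _.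
rewrite /detroot -{1}(powR_exprV m_gt0 c_ge0) -powRM ?exprn_ge0 //.
have lhs_ge0 : 0 <= (1 - eps) ^+ m * \det (infoX a xh) by rewrite mulr_ge0 ?exprn_ge0.
have rhs_ge0 := le_trans lhs_ge0 expect.
by apply: ge0_ler_powR expect; rewrite ?invr_ge0 ?ler0n ?nnegrE.
Qed.
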